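(* Let $n\ge 4$ and let $L$ be an $n$-bow, i.e. a generic length vector satisfying the strict triangle inequality such that $\{n,i\}$ is long for every $i=1,\dots,n-1$. Then $\Gamma(L)$ has exactly $2^{n-1}-2$ vertices, and this is the minimal number of vertices of $\Gamma(L')$ over all generic length vectors $L'\in\mathbb{R}_{>0}^n$ satisfying the strict triangle inequality.
   Context: Let $n\ge 4$ and $L=(l_1,\dots,l_n)$ be positive reals with $l_i<\sum_{j\ne i}l_j$ for every $i$ (strict triangle inequality), and generic: there is no $J\subseteq[n]$ with $\sum_{i\in J}l_i=\sum_{i\notin J}l_i$. Here $[n]=\{1,\dots,n\}$ and $|L|=\sum_{i=1}^n l_i$. A set $I\subseteq[n]$ is short if $\sum_{i\in I}l_i<|L|/2$ and long otherwise. A cyclically ordered partition of $[n]$ into $k$ parts is a sequence $(A_1,\dots,A_k)$ of pairwise disjoint nonempty sets with union $[n]$, considered up to cyclic shifts $(A_1,\dots,A_k)\sim(A_2,\dots,A_k,A_1)$; there is no ordering inside a part. It is admissible if every part is short. The graph $\Gamma(L)$ has as vertices the admissible cyclically ordered partitions of $[n]$ into 3 parts, written $(I,J,K)$, and as edges the admissible cyclically ordered partitions into 4 parts $(A,B,C,D)$; such an edge is incident to each of the partitions $(A\cup B,C,D)$, $(A,B\cup C,D)$, $(A,B,C\cup D)$, $(D\cup A,B,C)$ that is admissible. Equivalently, two vertices are adjacent iff one is obtained from the other by moving a nonempty proper subset of one part into another part. *)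

(* Length vectors L : 'I_n -> R over an arbitrary real field R
   (the paper's R is the real numbers; the statement is order-algebraic). *)
From HB Require Import structures.
From mathcomp Require Import all_boot all_order all_algebra.
Set Implicit Arguments. Unset Strict Implicit. Unset Printing Implicit Defensive.
Import Order.TTheory GRing.Theory Num.Theory.
Local Open Scope ring_scope.

Section Linkages.
Variables (R : realFieldType) (n : nat).
Implicit Types (L : 'I_n -> R) (I : {set 'I_n}).

Definition totlen L : R := \sum_(i < n) L i.
Definition slen L I : R := \sum_(i in I) L i.

Definition positive_lengths L : Prop := forall i, 0 < L i.
Definition strict_triangle L : Prop :=
  forall i : 'I_n, L i < \sum_(j < n | j != i) L j.
Definition generic L : Prop := forall J : {set 'I_n}, slen L J != slen L (~: J).

Definition short L I : bool := slen L I < totlen L / 2%:R.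
Definition long L I : bool := ~~ short L I.

Definition triple := ({set 'I_n} * {set 'I_n} * {set 'I_n})%type.

Definition is_part3 (t : triple) : bool :=
  let: (A, B, C) := t in
  [&& A != set0, B != set0, C != set0,
      [disjoint A & B], [disjoint B & C], [disjoint A & C] &
      A :|: B :|: C == [set: 'I_n]].

Definition admissible3 L (t : triple) : bool :=
  let: (A, B, C) := t in [&& short L A, short L B & short L C].

Definition cshift (t : triple) : triple :=
  let: (A, B, C) := t in (B, C, A).

Definition cyc_class (t : triple) : {set triple} :=
  [set t; cshift t; cshift (cshift t)].

(* Vertices of Gamma(L): admissible cyclically ordered partitions of [n]
   into 3 parts, i.e. classes of admissible ordered 3-partitions up to
   cyclic shift. *)
Definition Gamma_vertices L : {set {set triple}} :=
  [set cyc_class t | t in [set t : triple | is_part3 t && admissible3 L t]].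

(* n-bow: {n, i} is long for every i = 1..n-1 (index n is the element of
   'I_n with value n-1) *)
Definition is_bow L : Prop :=
  forall i j : 'I_n, nat_of_ord j = n.-1 -> i != j -> long L [set i; j].

End Linkages.

From HB Require Import structures.
From mathcomp Require Import all_boot all_order all_algebra.
From mathcomp Require Import lra zify.
Import Order.TTheory GRing.Theory Num.Theory.
Set Implicit Arguments. Unset Strict Implicit. Unset Printing Implicit Defensive.

(* Every admissible cyclically ordered 3-partition has exactly one rotation
   whose first part contains a fixed element a, so the vertices of Gamma(L)
   are counted by the set  seeded L P Q S  of admissible ordered
   3-partitions (A, B, C) with P in A, Q in B, S in C, taken for
   P = {a}, Q = S = {}.  These counts are bounded below by induction on the
   number k of elements outside the seeds, splitting on where a free element
   c goes (seeded_split):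
   - if c joined to the seeds stays short, recurse on the enlarged seeds;
   - if c |: P is long for every free c, then every nonempty proper subset
     of the free elements, put in the second part, yields an admissible
     partition (forced_bound), giving 2^k - 2 partitions.
   This gives at least 2^(k-1) partitions for two nonempty short seeds
   (two_seed_bound) and 2^k - 2 for one seed (one_seed_bound).  For a bow,
   with a = n, the first part must be exactly {a}, so the forced family is
   everything and the bound is attained (bow_seeded_sub). *)

Local Open Scope ring_scope.

Section ShortLong.
Variables (R : realFieldType) (n : nat) (L : 'I_n -> R).
Hypotheses (Lpos : positive_lengths L) (Ltri : strict_triangle L)
           (Lgen : generic L).

Lemma totlen_split (I : {set 'I_n}) : totlen L = slen L I + slen L (~: I).
Proof.
rewrite /totlen /slen (bigID (mem I)) /=; congr (_ + _).
by apply: eq_bigl => i; rewrite inE.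
Qed.

Lemma short_compl (I : {set 'I_n}) : short L (~: I) = long L I.
Proof.
rewrite /long /short (totlen_split I); have := Lgen I.
move: (slen L I) (slen L (~: I)) => a b; rewrite -leNgt.
by case: (ltgtP a b) => [ab | ba | ->]; rewrite ?eqxx //= => _;
  apply/idP/idP => h; lra.
Qed.

Lemma short_sub (I J : {set 'I_n}) : I \subset J -> short L J -> short L I.
Proof.
move=> sIJ; apply: le_lt_trans; rewrite /slen [leRHS](big_setID I) /=.
rewrite (setIidPr sIJ) lerDl; apply: sumr_ge0 => i _; exact: ltW.
Qed.

Lemma long_sup (I J : {set 'I_n}) : I \subset J -> long L I -> long L J.
Proof. by move=> sIJ; apply: contra; apply: short_sub. Qed.

Lemma short_set1 (i : 'I_n) : short L [set i].
Proof.
rewrite /short /slen /totlen big_set1 (bigD1 i) //=.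
have := Ltri i; move: (L i) (\sum_(j < n | j != i) L j) => a b h; lra.
Qed.

Lemma long_disjoint (I J : {set 'I_n}) :
  [disjoint I & J] -> long L I -> long L J -> False.
Proof.
rewrite disjoints_subset => sIJ /(long_sup sIJ) + lJ.
by rewrite /long short_compl lJ.
Qed.

End ShortLong.

Lemma set1_neq0 (T : finType) (c : T) : [set c] != set0.
Proof. by apply/set0Pn; exists c; rewrite inE. Qed.

Lemma setU1_neq0 (T : finType) (c : T) (A : {set T}) : c |: A != set0.
Proof. by apply/set0Pn; exists c; rewrite setU11. Qed.

Lemma disjoint_set0 (T : finType) (A : {set T}) : [disjoint A & set0].
Proof. by rewrite disjoints_subset setC0 subsetT. Qed.

Lemma disjoint_setU1 (T : finType) (c : T) (A B : {set T}) :
  c \notin B -> [disjoint A & B] -> [disjoint c |: A & B].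
Proof.
by rewrite !disjoints_subset subUset sub1set inE => -> ->.
Qed.

Lemma compl_setU1 (T : finType) (c : T) (A : {set T}) :
  ~: (c |: A) = ~: A :\ c.
Proof. by apply/setP => x; rewrite !inE negb_or. Qed.

Lemma card_setD1_succ (T : finType) (c : T) (D : {set T}) k :
  c \in D -> #|D| = k.+1 -> #|D :\ c| = k.
Proof. by move=> cD; rewrite (cardsD1 c) cD => -[]. Qed.

Section OrderedPartitions.
Variable n : nat.
Implicit Types (A B C : {set 'I_n}) (x : 'I_n).

Lemma part3E A B C :
  is_part3 (A, B, C) = [&& A != set0, B != set0, C != set0 &
     [forall x, (x \in A) + (x \in B) + (x \in C) == 1]%N].
Proof.
rewrite /is_part3; do 3 (case: (_ != set0) => //=).
apply/and4P/forallP => [[dAB dBC dAC /eqP/setP cover] x | count].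
  have := cover x; rewrite !inE.
  case xA: (x \in A); first by rewrite (disjointFr dAB xA) (disjointFr dAC xA).
  by case xB: (x \in B); [rewrite (disjointFr dBC xB) | case: (x \in C)].
have disj (D E F : {set 'I_n}) :
    (forall x, (x \in D) + (x \in E) + (x \in F) == 1)%N -> [disjoint D & E].
  by move=> cnt; apply/pred0P => x /=; have := cnt x;
    case: (x \in D); case: (x \in E).
split.
- exact: disj.
- by apply: (disj _ _ A) => x; rewrite addnC addnA; apply: count.
- by apply: (disj _ _ B) => x; rewrite addnAC; apply: count.
- apply/eqP/setP => x; have := count x; rewrite !inE.
  by case: (x \in A); case: (x \in B); case: (x \in C).
Qed.

Lemma part3_count A B C x :
  is_part3 (A, B, C) -> ((x \in A) + (x \in B) + (x \in C) = 1)%N.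
Proof. by rewrite part3E => /and4P [_ _ _ /forallP cnt]; apply/eqP. Qed.

Lemma part3_AB A B C x : is_part3 (A, B, C) -> x \in A -> x \in B -> False.
Proof.
by move/(part3_count x); case: (x \in A); case: (x \in B); case: (x \in C).
Qed.

Lemma part3_AC A B C x : is_part3 (A, B, C) -> x \in A -> x \in C -> False.
Proof.
by move/(part3_count x); case: (x \in A); case: (x \in B); case: (x \in C).
Qed.

Lemma part3_BC A B C x : is_part3 (A, B, C) -> x \in B -> x \in C -> False.
Proof.
by move/(part3_count x); case: (x \in A); case: (x \in B); case: (x \in C).
Qed.

Lemma part3_swap12 A B C : is_part3 (B, A, C) = is_part3 (A, B, C).
Proof.
rewrite !part3E; case: (A != set0); case: (B != set0) => //=.
by congr (_ && _); apply: eq_forallb => x; rewrite (addnC (x \in B)).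
Qed.

Lemma part3_swap23 A B C : is_part3 (A, C, B) = is_part3 (A, B, C).
Proof.
rewrite !part3E; case: (B != set0); case: (C != set0) => //=.
by congr (_ && _); apply: eq_forallb => x; rewrite addnAC.
Qed.

Lemma part3_cshift A B C : is_part3 (B, C, A) = is_part3 (A, B, C).
Proof. by rewrite part3_swap23 part3_swap12. Qed.

Definition proper_subsets (D : {set 'I_n}) : {set {set 'I_n}} :=
  [set S : {set 'I_n} | [&& S \subset D, S != set0 & S != D]].

Lemma card_proper_subsets (D : {set 'I_n}) :
  #|proper_subsets D| = (2 ^ #|D| - 2)%N.
Proof.
have -> : proper_subsets D = powerset D :\: [set set0; D].
  apply/setP => S; rewrite !inE.
  by case: (S \subset D); rewrite ?andbF // andbT negb_or.
rewrite cardsD (setIidPr _); last first.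
  by apply/subsetP => S; rewrite !inE => /orP [] /eqP ->; rewrite ?sub0set.
by rewrite card_powerset cards2; case: eqP => [<-|_]; rewrite ?cards0.
Qed.

End OrderedPartitions.

Section SeededPartitions.
Variables (R : realFieldType) (n : nat) (L : 'I_n -> R).
Hypotheses (Lpos : positive_lengths L) (Ltri : strict_triangle L)
           (Lgen : generic L).
Implicit Types (P Q S A B C : {set 'I_n}).

Definition seeded P Q S : {set triple n} :=
  [set t : triple n | let: (A, B, C) := t in
     [&& is_part3 t, admissible3 L t, P \subset A, Q \subset B & S \subset C]].

Lemma seededE P Q S A B C :
  ((A, B, C) \in seeded P Q S) =
  [&& is_part3 (A, B, C), admissible3 L (A, B, C),
      P \subset A, Q \subset B & S \subset C].
Proof. by rewrite inE. Qed.

Lemma seeded_mono P Q S P' Q' S' :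
  P \subset P' -> Q \subset Q' -> S \subset S' ->
  seeded P' Q' S' \subset seeded P Q S.
Proof.
move=> sP sQ sS; apply/subsetP => -[[A B] C]; rewrite !seededE.
case/and5P => -> -> sA sB sC /=.
by rewrite (subset_trans sP sA) (subset_trans sQ sB) (subset_trans sS sC).
Qed.

Lemma seeded_swap12 P Q S : (#|seeded P Q S| <= #|seeded Q P S|)%N.
Proof.
pose swap (t : triple n) := let: (A, B, C) := t in (B, A, C).
have swap_inj : injective swap by move=> [[? ?] ?] [[? ?] ?] [-> -> ->].
rewrite -(card_imset _ swap_inj); apply: subset_leq_card.
apply/subsetP => _ /imsetP [[[A B] C] + ->]; rewrite !seededE.
rewrite part3_swap12 => /and5P [-> + -> -> ->].
by rewrite /admissible3 => /and3P [-> -> ->].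
Qed.

Lemma seeded_swap23 P Q S : (#|seeded P Q S| <= #|seeded P S Q|)%N.
Proof.
pose swap (t : triple n) := let: (A, B, C) := t in (A, C, B).
have swap_inj : injective swap by move=> [[? ?] ?] [[? ?] ?] [-> -> ->].
rewrite -(card_imset _ swap_inj); apply: subset_leq_card.
apply/subsetP => _ /imsetP [[[A B] C] + ->]; rewrite !seededE.
rewrite part3_swap23 => /and5P [-> + -> -> ->].
by rewrite /admissible3 => /and3P [-> -> ->].
Qed.

(* Splitting on the part that contains a given point c: the three cases are
   disjoint subfamilies. *)
Lemma seeded_split P Q S c :
  (#|seeded (c |: P) Q S| + #|seeded P (c |: Q) S| + #|seeded P Q (c |: S)|
   <= #|seeded P Q S|)%N.
Proof.
set X := seeded (c |: P) Q S; set Y := seeded P (c |: Q) S.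
set Z := seeded P Q (c |: S).
have add_disj (U V : {set triple n}) :
    (forall t, t \in U -> t \in V -> False) -> #|U :|: V| = (#|U| + #|V|)%N.
  move=> UV; rewrite -cardsUI; suff -> : U :&: V = set0 by rewrite cards0 addn0.
  by apply/setP => t; rewrite !inE; apply/andP => -[/UV].
have cin U : c \in c |: U by rewrite setU11.
have XY t : t \in X -> t \in Y -> False.
  case: t => [[A B] C]; rewrite !seededE => /and5P [p _ /subsetP cA _ _].
  case/and5P => _ _ _ /subsetP cB _.
  exact: part3_AB p (cA c (cin _)) (cB c (cin _)).
have XYZ t : t \in X :|: Y -> t \in Z -> False.
  case: t => [[A B] C]; rewrite inE !seededE => + /and5P [p _ _ _ /subsetP cC].
  case/orP => /and5P [_ _ /subsetP cA /subsetP cB _].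
    exact: part3_AC p (cA c (cin _)) (cC c (cin _)).
  exact: part3_BC p (cB c (cin _)) (cC c (cin _)).
rewrite -add_disj // -add_disj //; apply: subset_leq_card.
by rewrite !subUset !seeded_mono ?subsetUr.
Qed.

Definition fill P Q S : triple n := (P, Q :|: S, ~: (P :|: Q) :\: S).

Section Forced.
Variables P Q : {set 'I_n}.
Hypotheses (P0 : P != set0) (dPQ : [disjoint P & Q]) (sP : short L P).
Hypothesis longP : forall c, c \in ~: (P :|: Q) -> long L (c |: P).

Lemma short_avoiding X c :
  c \in ~: (P :|: Q) -> c |: P \subset ~: X -> short L X.
Proof.
move=> cD sub; rewrite -[X]setCK short_compl //.
exact: long_sup sub (longP cD).
Qed.

Lemma fill_seeded S :
  S \in proper_subsets (~: (P :|: Q)) -> fill P Q S \in seeded P Q set0.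
Proof.
rewrite inE => /and3P [/subsetP sD S0 SD].
have /set0Pn [c cC] : ~: (P :|: Q) :\: S != set0.
  by rewrite setD_eq0; apply: contra SD => sDS; rewrite eqEsubset sDS andbT;
    apply/subsetP.
have /set0Pn [s sS] := S0.
rewrite /fill seededE subxx subsetUl sub0set !andbT; apply/andP; split.
- rewrite part3E P0 setU_eq0 negb_and S0 orbT /=.
  apply/andP; split; first by apply/set0Pn; exists c.
  apply/forallP => x; have := sD x; rewrite !inE.
  case xP: (x \in P); first rewrite (disjointFr dPQ xP);
    by case: (x \in Q); case: (x \in S) => // /(_ isT).
rewrite /admissible3 sP /=; apply/andP; split.
- move: cC; rewrite inE => /andP [cS cD]; apply: (short_avoiding cD).
  apply/subsetP => x; rewrite !inE => /predU1P [-> | xP].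
    by move: cD; rewrite !inE negb_or => /andP [_ /negbTE ->].
  rewrite (disjointFr dPQ xP) /=; apply: contraL xP => /sD.
  by rewrite !inE negb_or => /andP [].
- apply: (short_avoiding (sD s sS)); apply/subsetP => x; rewrite !inE.
  by case/predU1P => [-> | xP]; rewrite ?sS ?xP ?andbF.
Qed.

Lemma fill_inj : {in proper_subsets (~: (P :|: Q)) &, injective (fill P Q)}.
Proof.
move=> S1 S2; rewrite !inE => /and3P [/subsetP s1 _ _] /and3P [/subsetP s2 _ _].
case=> /setP e _; apply/setP => x; have := e x; rewrite !inE.
case xS1: (x \in S1); case xS2: (x \in S2) => //=.
- by move: (s1 x xS1); rewrite !inE negb_or => /andP [_ /negbTE ->].
- by move: (s2 x xS2); rewrite !inE negb_or => /andP [_ /negbTE ->].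
Qed.

(* Every nonempty proper subset of the free points yields an admissible
   partition. *)
Lemma forced_bound : (2 ^ #|~: (P :|: Q)| - 2 <= #|seeded P Q set0|)%N.
Proof.
rewrite -card_proper_subsets -(card_in_imset fill_inj); apply: subset_leq_card.
by apply/subsetP => _ /imsetP [S hS ->]; exact: fill_seeded.
Qed.

End Forced.

(* If each free point makes P or Q long, then the same seed is made long by
   every free point: otherwise two disjoint sets c |: P and d |: Q would
   both be long. *)
Lemma long_one_side P Q : [disjoint P & Q] ->
  (forall c, c \in ~: (P :|: Q) -> long L (c |: P) || long L (c |: Q)) ->
  (forall c, c \in ~: (P :|: Q) -> long L (c |: P)) \/
  (forall c, c \in ~: (P :|: Q) -> long L (c |: Q)).
Proof.
move=> dPQ either.
case: (boolP [forall c, (c \in ~: (P :|: Q)) ==> long L (c |: P)]).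
  by move/forallP => allP; left => c cD; have := allP c; rewrite cD.
case/forallPn => c; rewrite negb_imply => /andP [cD /negbTE scP].
have lcQ : long L (c |: Q) by have := either c cD; rewrite scP.
right => d dD; case/orP: (either d dD) => // ldP; exfalso.
apply: (long_disjoint Lpos Lgen _ ldP lcQ); rewrite disjoints_subset.
move: cD dD; rewrite !inE !negb_or => /andP [cP cQ] /andP [dP dQ].
apply/subsetP => x; rewrite !inE negb_or => /predU1P [-> | xP].
  by rewrite dQ andbT; apply: contraTneq ldP => ->; rewrite scP.
by rewrite (disjointFr dPQ xP) andbT; apply: contraTneq xP => ->.
Qed.

Lemma two_seed_bound k P Q :
  P != set0 -> Q != set0 -> [disjoint P & Q] -> short L P -> short L Q ->
  #|~: (P :|: Q)| = k.+1 -> (2 ^ k <= #|seeded P Q set0|)%N.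
Proof.
elim: k P Q => [|k IH] P Q P0 Q0 dPQ sP sQ cardD.
  have /cards1P [r Dr] : #|~: (P :|: Q)| == 1%N by rewrite cardD.
  rewrite card_gt0; apply/set0Pn; exists (P, Q, [set r]).
  rewrite seededE /admissible3 sP sQ short_set1 // !subxx sub0set !andbT.
  rewrite part3E P0 Q0 set1_neq0; apply/forallP => x; rewrite -Dr !inE.
  case xP: (x \in P); last by case: (x \in Q).
  by rewrite (disjointFr dPQ xP).
case: (boolP [exists c, [&& c \in ~: (P :|: Q), short L (c |: P)
                                                & short L (c |: Q)]]).
  case/existsP => c /and3P [cD scP scQ].
  have cardD' := card_setD1_succ cD cardD.
  have [cP cQ] : c \notin P /\ c \notin Q.
    by move: cD; rewrite !inE negb_or => /andP.
  have dcPQ : [disjoint c |: P & Q] by exact: disjoint_setU1.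
  have dPcQ : [disjoint P & c |: Q].
    by rewrite disjoint_sym disjoint_setU1 // disjoint_sym.
  have leP := IH (c |: P) Q (setU1_neq0 _ _) Q0 dcPQ scP sQ.
  have leQ := IH P (c |: Q) P0 (setU1_neq0 _ _) dPcQ sP scQ.
  rewrite -setUA compl_setU1 in leP; rewrite setUCA compl_setU1 in leQ.
  apply: leq_trans (seeded_split P Q set0 c); rewrite expnS mul2n -addnn.
  by apply: leq_trans (leq_addr _ _); rewrite leq_add ?leP ?leQ.
move/existsPn => none.
have either c : c \in ~: (P :|: Q) -> long L (c |: P) || long L (c |: Q).
  by move=> cD; have := none c; rewrite cD /= negb_and.
have grow : (2 ^ k.+1 <= 2 ^ #|~: (P :|: Q)| - 2)%N.
  have : (0 < 2 ^ k)%N by rewrite expn_gt0.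
  by rewrite cardD !expnS; move: (2 ^ k)%N => m; lia.
apply: leq_trans grow _; case: (long_one_side dPQ either) => [longP | longQ].
  exact: forced_bound.
apply: leq_trans (seeded_swap12 Q P set0); rewrite setUC.
apply: forced_bound => //; first by rewrite disjoint_sym.
by move=> c; rewrite setUC; apply: longQ.
Qed.


Lemma one_seed_bound k P :
  P != set0 -> short L P -> #|~: P| = k ->
  (2 ^ k - 2 <= #|seeded P set0 set0|)%N.
Proof.
elim: k P => [|k IH] P P0 sP cardD; first by rewrite expn0.
case: (boolP [exists c, (c \in ~: P) && short L (c |: P)]); last first.
  move/existsPn => none; have := @forced_bound P set0 P0 (disjoint_set0 P) sP.
  rewrite setU0 cardD; apply=> c cD.
  by have := none c; rewrite cD.
case/existsP => c /andP [cD scP]; case: k IH cardD => [|j] IH cardD //.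
have cardD' := card_setD1_succ cD cardD.
have leA := IH (c |: P) (setU1_neq0 _ _) scP; rewrite compl_setU1 in leA.
have dPc : [disjoint P & [set c]] by rewrite disjoint_sym disjoints1 -in_setC.
have leB := two_seed_bound (k := j) P0 (set1_neq0 c) dPc sP (short_set1 Ltri c).
rewrite setUC compl_setU1 in leB.
have leC := leq_trans (leB cardD') (seeded_swap23 P [set c] set0).
apply: leq_trans (seeded_split P set0 set0 c); rewrite !setU0.
have : (0 < 2 ^ j)%N by rewrite expn_gt0.
move: (leA cardD') (leB cardD') leC; rewrite !expnS.
by move: (2 ^ j)%N => m; lia.
Qed.

End SeededPartitions.

Section Vertices.
Variables (R : realFieldType) (n : nat) (L : 'I_n -> R).

Lemma cyc_class_cshift (t : triple n) : cyc_class (cshift t) = cyc_class t.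
Proof.
case: t => [[A B] C]; apply/setP => x; rewrite !inE.
by case: (x == (A, B, C)); case: (x == (B, C, A)); case: (x == (C, A, B)).
Qed.

Lemma admissible3_cshift (A B C : {set 'I_n}) :
  admissible3 L (B, C, A) = admissible3 L (A, B, C).
Proof.
rewrite /admissible3 /=.
by case: (short L A); case: (short L B); case: (short L C).
Qed.

(* The vertices correspond to the admissible ordered 3-partitions whose
   first part contains a: each cyclic class has exactly one such rotation. *)
Lemma card_Gamma_vertices (a : 'I_n) :
  #|Gamma_vertices L| = #|seeded L [set a] set0 set0|.
Proof.
have -> : Gamma_vertices L = @cyc_class n @: seeded L [set a] set0 set0.
  apply/eqP; rewrite eqEsubset; apply/andP; split; last first.
    apply: imsetS; apply/subsetP => -[[A B] C].
    by rewrite seededE inE => /and5P [-> -> _ _ _].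
  apply/subsetP => _ /imsetP [[[A B] C] + ->]; rewrite inE => /andP [p ad].
  have := part3_count a p.
  case aA: (a \in A); case aB: (a \in B); case aC: (a \in C) => // _;
    apply/imsetP.
  - by exists (A, B, C); rewrite // seededE p ad sub1set aA !sub0set.
  - exists (cshift (A, B, C)); last by rewrite cyc_class_cshift.
    by rewrite seededE part3_cshift admissible3_cshift p ad sub1set aB !sub0set.
  - exists (cshift (cshift (A, B, C))); last by rewrite !cyc_class_cshift.
    rewrite seededE -part3_cshift -admissible3_cshift.
    by rewrite p ad sub1set aC !sub0set.
rewrite card_in_imset // => -[[A B] C] [[A' B'] C'].
rewrite !seededE !sub1set => /and5P [_ _ aA _ _] /and5P [p _ aA' _ _] e.
have : (A, B, C) \in cyc_class (A', B', C') by rewrite -e !inE eqxx.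
rewrite !inE => /orP [/orP [/eqP // | /eqP [eA _ _]] | /eqP [eA _ _]].
- by rewrite eA in aA; case: (part3_AB p aA' aA).
- by rewrite eA in aA; case: (part3_AC p aA' aA).
Qed.

(* For a bow-like point a (every pair {c, a} long) the first part of an
   admissible partition is exactly {a}, so the partition is the filling of
   {a} by its second part. *)
Lemma bow_seeded_sub (a : 'I_n) : positive_lengths L ->
  (forall c, c != a -> long L [set c; a]) ->
  seeded L [set a] set0 set0 \subset
  fill [set a] set0 @: proper_subsets (~: ([set a] :|: set0)).
Proof.
move=> Lpos longa; apply/subsetP => -[[A B] C].
rewrite seededE sub1set => /and5P [p /and3P [sA _ _] aA _ _].
have eA : A = [set a].
  apply/setP => x; rewrite inE; case: (eqVneq x a) => [-> // | xa].
  apply: contraTF sA => xA; apply: (long_sup Lpos _ (longa x xa)).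
  by apply/subsetP => y; rewrite !inE => /orP [] /eqP ->.
subst A; have count x := part3_count x p.
apply/imsetP; exists B.
- rewrite inE setU0; apply/and3P; split.
  + apply/subsetP => y yB; rewrite !inE; apply: contraTneq yB => ->.
    by have := count a; rewrite !inE eqxx; case: (a \in B).
  + by move: p; rewrite part3E => /and4P [].
  + move: p; rewrite part3E => /and4P [_ _ /set0Pn [x xC] _].
    apply/eqP => /setP /(_ x); have := count x; rewrite xC !inE.
    by case: (x == a); case: (x \in B).
- rewrite /fill set0U setU0; congr (_, _, _); apply/setP => x.
  have := count x; rewrite !inE.
  by case: (x == a); case: (x \in B); case: (x \in C).
Qed.

End Vertices.

Local Close Scope ring_scope.

Theorem mainTheorem2 (R : realFieldType) (n : nat) (L : 'I_n -> R) :
  (4 <= n)%N ->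
  positive_lengths L -> strict_triangle L -> generic L -> is_bow L ->
  #|Gamma_vertices L| = (2 ^ n.-1 - 2)%N /\
  (forall L' : 'I_n -> R,
     positive_lengths L' -> strict_triangle L' -> generic L' ->
     (2 ^ n.-1 - 2 <= #|Gamma_vertices L'|)%N).
Proof.
move=> n_ge4 Lpos Ltri Lgen bow.
have last_lt_n : n.-1 < n by rewrite ltn_predL (leq_trans _ n_ge4).
pose a := Ordinal last_lt_n.
have free : #|~: ([set a] :|: set0)| = n.-1.
  have := cardsC [set a]; rewrite cards1 card_ord add1n setU0.
  by move/(congr1 predn).
split.
- rewrite (card_Gamma_vertices L a); apply/eqP; rewrite eqn_leq.
  apply/andP; split.
  + apply: leq_trans (subset_leq_card (bow_seeded_sub Lpos _)) _.
      by move=> c ca; apply: bow.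
    by rewrite (leq_trans (leq_imset_card _ _)) // card_proper_subsets free.
  + rewrite -free; apply: forced_bound => //.
    * exact: set1_neq0.
    * exact: disjoint_set0.
    * exact: short_set1.
    * by move=> c; rewrite setU0 !inE => ca; apply: bow.
- move=> L' Lpos' Ltri' Lgen'; rewrite (card_Gamma_vertices L' a).
  apply: one_seed_bound (set1_neq0 a) (short_set1 Ltri' a) _ => //.
  by rewrite -free setU0.
Qed.
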